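(* Let $k$ be an odd integer with $k\ge 5$, let $D$ be a strong $k$-quasi-transitive digraph with $\mathrm{diam}(D)\ge k+2$, let $u,v\in V(D)$ with $d(u,v)=k+2$, and let $P=x_0x_1\ldots x_{k+2}$ be a shortest $(u,v)$-path. Let $I=\{x\in V(D)\setminus V(P): x\Rightarrow V(P)\}$ and $W=\{x\in V(D)\setminus V(P): V(P)\Rightarrow x\}$. If $D[V(P)]$ is a semicomplete digraph, then $x\mapsto V(P)$ for every $x\in I$ and $V(P)\mapsto y$ for every $y\in W$.
   Context: All digraphs are finite, without loops or multiple arcs (opposite arcs allowed). $x\rightarrow y$ means $xy\in A(D)$; $x,y$ are adjacent if $x\rightarrow y$ or $y\rightarrow x$. For disjoint vertex sets $X,Y$ (singletons identified with vertices): $X\rightarrow Y$ means every vertex of $X$ dominates every vertex of $Y$; $X\Rightarrow Y$ means there is no arc from $Y$ to $X$; $X\mapsto Y$ means both $X\rightarrow Y$ and $X\Rightarrow Y$. For $k\ge 2$, $D$ is $k$-quasi-transitive if for every path $x_0x_1\ldots x_k$ of length $k$, $x_0$ and $x_k$ are adjacent. $d(x,y)$ is the length of a shortest $(x,y)$-path, $\mathrm{diam}(D)=\max_{x,y}d(x,y)$. $D[S]$ is the induced subdigraph; a semicomplete digraph is one in which every two distinct vertices are adjacent. *)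

From mathcomp Require Import all_boot.
Set Implicit Arguments. Unset Strict Implicit. Unset Printing Implicit Defensive.

Section Digraphs.
Variables (T : finType) (arc : rel T).

Definition adjacent (x y : T) : bool := arc x y || arc y x.

(* x :: s is a (directed) path: consecutive arcs, distinct vertices.
   It starts at x, ends at last x s, and has length size s. *)
Definition dipath (x : T) (s : seq T) : bool := path arc x s && uniq (x :: s).

Definition quasi_transitive (k : nat) : Prop :=
  forall x s, dipath x s -> size s = k -> adjacent x (last x s).

Definition strong : Prop :=
  forall x y, exists s, dipath x s /\ last x s = y.

Definition dist_is (x y : T) (n : nat) : Prop :=
  (exists s, [/\ dipath x s, last x s = y & size s = n]) /\
  (forall s, dipath x s -> last x s = y -> n <= size s).

Definition diam_ge (m : nat) : Prop :=
  exists x y n, dist_is x y n /\ m <= n.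

End Digraphs.

From mathcomp Require Import all_boot zify.
Set Implicit Arguments. Unset Strict Implicit. Unset Printing Implicit Defensive.

(* A shortest (u, v)-path P = x_0 ... x_{k+2} has no forward chords, so in
   the semicomplete D[V(P)] every x_j with j >= i + 2 dominates x_i; hence
   x_0 ... x_{k-1} and x_3 ... x_{k+2} are k-cycles which cover P and share x_3.
   Let z lie outside P with no arc from P to z.  If z -> y with y on one of these
   k-cycles C, then z y ... (prev y) is a k-path, so z -> prev y; hence z dominates
   C, and through x_3 all of P.  It remains to find one arc from z into P.  By
   induction on r, a vertex w whose shortest walk w p_1 ... p_r into P has length
   r >= 2 receives an arc from P: for r <= k extend the walk inside P (along the
   cycles) to a k-path, whose last vertex is adjacent to w but cannot be reached
   from w; for r > k use an in-neighbour y in P of p_2 and the k-path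
   y p_2 ... p_k w, where p_k -> w because w p_1 ... p_k is a k-path without
   shortcut.  By strong connectivity this applies to z unless z -> P directly.
   The statement for W follows by reversing all arcs. *)

Section SeqFacts.
Variable T : eqType.

Lemma mem_last_take (x y : T) p :
  y \in x :: p -> exists2 j, j <= size p & last x (take j p) = y.
Proof.
elim: p x => [|z p IHp] x; first by rewrite mem_seq1 => /eqP ->; exists 0.
rewrite in_cons => /predU1P[-> | /IHp[j jp <-]]; first by exists 0.
by exists j.+1.
Qed.

Lemma last_rev_belast (x : T) p : last (last x p) (rev (belast x p)) = x.
Proof. by case: p => //= y p; rewrite rev_cons last_rcons. Qed.

Lemma mem_rev_belast (x y : T) p :
  (y \in last x p :: rev (belast x p)) = (y \in x :: p).
Proof. by rewrite -rev_rcons -lastI mem_rev. Qed.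

Lemma prev_head (y : T) t : y \notin t -> prev (y :: t) y = last y t.
Proof. by move=> yt; rewrite prev_nth mem_head memNindex // -last_nth. Qed.

Lemma backward_path_all (D : pred T) x p :
  path (fun a b => D b ==> D a) x p -> D (last x p) -> all D (x :: p).
Proof.
elim: p x => [|y p IHp] x; first by rewrite /= andbT.
case/andP=> /implyP Dyx /IHp IH /IH Dyp; apply/andP; split=> //.
by apply: Dyx; case/andP: Dyp.
Qed.

Lemma cycle_prev_closed (D : pred T) c :
  uniq c -> {in c, forall y, D y -> D (prev c y)} -> has D c -> all D c.
Proof.
move=> uc Dprev /hasP[y cy Dy].
have: cycle (fun a b => D b ==> D a) c.
  by apply: cycle_from_prev => // x cx; apply/implyP/Dprev.
have [i t rot_c] := rot_to cy; rewrite -(rot_cycle i) rot_c => /backward_path_all.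
rewrite last_rcons => /(_ Dy) /andP[_ Dty].
have /andP[_ Dt] : D y && all D t by rewrite -all_rcons.
by apply/allP => x; rewrite -(mem_rot i) rot_c in_cons => /predU1P[-> | /(allP Dt)].
Qed.

Lemma last_drop (x : T) p i : last (last x (take i p)) (drop i p) = last x p.
Proof. by rewrite -last_cat cat_take_drop. Qed.

End SeqFacts.

Section Walks.
Variables (T : finType) (arc : rel T).
Implicit Types (x : T) (p q : seq T) (S : seq T).

Lemma path_drop x p i :
  path arc x p -> path arc (last x (take i p)) (drop i p).
Proof. by rewrite -{1}(cat_take_drop i p) cat_path => /andP[]. Qed.

Lemma dipath_take x p i : dipath arc x p -> dipath arc x (take i p).
Proof.
case/andP=> xp ux; rewrite /dipath take_path //.
by rewrite -[x :: _]/(take i.+1 (x :: p)) take_uniq.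
Qed.

Lemma dipath_drop x p i :
  dipath arc x p -> dipath arc (last x (take i p)) (drop i p).
Proof.
case/andP=> xp ux; apply/andP; split; first exact: path_drop.
move: ux; rewrite -{1}(cat_take_drop i p) -cat_cons cat_uniq => /and3P[_ disj ud].
rewrite cons_uniq ud andbT; apply: contra disj => lastp.
by apply/hasP; exists (last x (take i p)); rewrite ?mem_last.
Qed.

Lemma shorten_walk x p : path arc x p ->
  exists2 q, dipath arc x q & last x q = last x p /\ size q <= size p.
Proof.
case/shortenP=> q xq uxq qp; exists q; first by rewrite /dipath xq.
by split=> //; apply: uniq_leq_size => //; case/andP: uxq.
Qed.

Lemma dipath_rev x p :
  dipath arc x p -> dipath (fun a b => arc b a) (last x p) (rev (belast x p)).
Proof.
case/andP=> xp ux; apply/andP; split; first by rewrite rev_path.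
by rewrite -rev_rcons -lastI rev_uniq.
Qed.

Definition shortest_walk (S : seq T) (x : T) (p : seq T) : Prop :=
  [/\ path arc x p, last x p \in S &
      forall q, path arc x q -> last x q \in S -> size p <= size q].

Lemma shortest_walk_take S x p i :
  shortest_walk S x p -> shortest_walk [:: last x (take i p)] x (take i p).
Proof.
case=> xp pS pmin; split; [exact: take_path | exact: mem_head |].
move=> q xq; rewrite mem_seq1 => /eqP qi.
have := pmin (q ++ drop i p); rewrite cat_path xq last_cat qi path_drop //.
rewrite last_drop size_cat size_drop size_take_min => /(_ isT pS); lia.
Qed.

Lemma shortest_walk_drop S x p i :
  shortest_walk S x p -> shortest_walk S (last x (take i p)) (drop i p).
Proof.
case=> xp pS pmin; split; [exact: path_drop | by rewrite last_drop |].
move=> q yq qS; have := pmin (take i p ++ q).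
rewrite cat_path take_path // yq last_cat size_cat size_drop size_take_min.
move=> /(_ isT qS); lia.
Qed.

Lemma shortest_walk_no_arc S x p y :
  shortest_walk S x p -> 1 < size p -> y \in S -> ~~ arc x y.
Proof.
case=> _ _ pmin p_gt1 yS; apply/negP => xy.
by have := pmin [:: y]; rewrite /= xy => /(_ isT yS); lia.
Qed.

Lemma shortest_walk_prefix_notin S x p j :
  shortest_walk S x p -> j < size p -> last x (take j p) \notin S.
Proof.
case=> xp _ pmin jp; apply/negP => /(pmin _ (take_path j xp)).
by rewrite size_take_min; lia.
Qed.

Lemma shortest_walk_ucycle S x p :
  shortest_walk S x p -> uniq (x :: p) -> 1 < size p ->
  adjacent arc x (last x p) -> ucycle arc (x :: p).
Proof.
move=> sw ux p_gt1; have [xp pS _] := sw.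
rewrite /adjacent (negbTE (shortest_walk_no_arc sw p_gt1 pS)) /= => lx.
by apply/andP; split=> //; rewrite /= rcons_path xp lx.
Qed.

Lemma shortest_walk_exists S x :
  (exists p, path arc x p && (last x p \in S)) ->
  exists2 p, shortest_walk S x p & uniq (x :: p).
Proof.
move=> [p0 xp0].
pose walk_of n := [exists t : n.-tuple T, path arc x t && (last x t \in S)].
have ex_walk : exists n, walk_of n.
  by exists (size p0); apply/existsP; exists (in_tuple p0).
have [r /existsP[t /andP[xt tS]] rmin] := ex_minnP ex_walk.
have [q /andP[xq uq] [qt qt_size]] := shorten_walk xt.
exists q => //; split; rewrite ?qt //.
move=> q' xq' q'S; rewrite (leq_trans qt_size) // size_tuple rmin //.
by apply/existsP; exists (in_tuple q'); rewrite xq'.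
Qed.

Lemma dist_shortest_walk x p :
  dist_is arc x (last x p) (size p) -> path arc x p ->
  shortest_walk [:: last x p] x p.
Proof.
case=> _ pmin xp; split=> // [|q xq]; first exact: mem_head.
rewrite mem_seq1 => /eqP ql; have [q' xq' [q'l q'q]] := shorten_walk xq.
exact: leq_trans (pmin _ xq' (etrans q'l ql)) q'q.
Qed.

End Walks.

Section Converse.
Variables (T : finType) (arc : rel T).
Implicit Types (x : T) (p q : seq T).

Lemma shortest_walk_rev x p :
  shortest_walk arc [:: last x p] x p ->
  shortest_walk (fun a b => arc b a) [:: x] (last x p) (rev (belast x p)).
Proof.
case=> xp _ pmin; split; [by rewrite rev_path | by rewrite last_rev_belast mem_head |].
move=> q lq; rewrite mem_seq1 => /eqP qx.
have xq : path arc x (rev (belast (last x p) q)) by rewrite -{1}qx rev_path.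
have := pmin _ xq; rewrite -{1}qx last_rev_belast mem_head !size_rev !size_belast.
by apply.
Qed.

Lemma quasi_transitive_rev k :
  quasi_transitive arc k -> quasi_transitive (fun a b => arc b a) k.
Proof.
move=> hqt x p xp size_p; have := hqt _ _ (dipath_rev xp).
by rewrite last_rev_belast size_rev size_belast; apply.
Qed.

Lemma strong_rev : strong arc -> strong (fun a b => arc b a).
Proof.
move=> hs x y; have [p [yp <-]] := hs y x.
by exists (rev (belast y p)); rewrite last_rev_belast; split=> //; apply: dipath_rev.
Qed.

End Converse.

Section Cycles.
Variables (T : finType) (arc : rel T).
Implicit Types (c p : seq T).

Lemma ucycle_dipath c y l : ucycle arc c -> y \in c -> l < size c ->
  exists q, [/\ dipath arc y q, size q = l & {subset q <= c}].
Proof.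
move=> cycc cy lc; have [i t rot_c] := rot_to cy.
have /andP[/= + uyt] : ucycle arc (y :: t) by rewrite -rot_c rot_ucycle.
rewrite rcons_path => /andP[yt _].
have size_t : size t = (size c).-1 by rewrite -(size_rot i c) rot_c.
exists (take l t); split.
- by apply: dipath_take; apply/andP.
- by rewrite size_takel // size_t; lia.
- by move=> x /mem_take xt; rewrite -(mem_rot i) rot_c in_cons xt orbT.
Qed.

Variable k : nat.
Hypothesis hqt : quasi_transitive arc k.

Lemma ucycle_dominated c z :
  ucycle arc c -> size c = k -> z \notin c -> {in c, forall y, ~~ arc y z} ->
  has (arc z) c -> all (arc z) c.
Proof.
move=> cycc size_c zc noin; have /andP[_ uc] := cycc.
apply: cycle_prev_closed => // y cy zy; have [i t rot_c] := rot_to cy.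
have /andP[/= + uyt] : ucycle arc (y :: t) by rewrite -rot_c rot_ucycle.
rewrite rcons_path => /andP[yt _].
have tc x : x \in y :: t -> x \in c by rewrite -rot_c mem_rot.
have zyt : dipath arc z (y :: t).
  by rewrite /dipath /= zy yt /= uyt andbT; apply: contra zc => /tc.
have := hqt zyt; rewrite -rot_c size_rot size_c rot_c => /(_ erefl).
rewrite -(prev_rot i uc) rot_c prev_head; last by case/andP: uyt.
by rewrite /adjacent /= (negbTE (noin _ (tc _ (mem_last _ _)))) orbF.
Qed.

End Cycles.

Section ArcIntoSet.
Variables (T : finType) (arc : rel T) (k : nat) (S : seq T).
Hypotheses (k_gt2 : 2 < k) (hqt : quasi_transitive arc k).
Hypothesis S_dipaths : forall y l, y \in S -> l <= k - 2 ->
  exists q, [/\ dipath arc y q, size q = l & {subset q <= S}].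

Lemma shortest_walk_in_arc_base w q :
  shortest_walk arc S w q -> uniq (w :: q) -> 1 < size q -> size q <= k ->
  exists2 y, y \in S & arc y w.
Proof.
move=> sw uq q_gt1 q_le_k; have [wq qS _] := sw.
have [|q2 [/andP[lq2 ulq2] size_q2 q2S]] := S_dipaths (l := k - size q) qS; first lia.
have yS : last (last w q) q2 \in S.
  by have := mem_last (last w q) q2; rewrite in_cons => /predU1P[-> | /q2S].
have wq2 : dipath arc w (q ++ q2).
  rewrite /dipath cat_path wq lq2 -cat_cons cat_uniq uq.
  move: ulq2; rewrite cons_uniq => /andP[lq2' ->]; rewrite /= andbT.
  apply/hasPn => x xq2; apply/negP => /mem_last_take[j jq xE].
  have [jq' | qj] := ltnP j (size q).
    by move: (shortest_walk_prefix_notin sw jq'); rewrite xE q2S.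
  by move: xE lq2'; rewrite take_oversize // => ->; rewrite xq2.
have := hqt wq2; rewrite size_cat size_q2 subnKC // last_cat.
case/(_ erefl)/orP=> [wy | ]; last by exists (last (last w q) q2).
by move: (shortest_walk_no_arc sw q_gt1 yS); rewrite wy.
Qed.

Lemma shortest_walk_in_arc_step w p1 p2 q y :
  shortest_walk arc S w [:: p1, p2 & q] -> uniq [:: w, p1, p2 & q] ->
  k < (size q).+2 -> y \in S -> arc y p2 -> arc y w.
Proof.
move=> sw uq k_lt yS yp2; set t := take (k - 2) q.
have take_k : take k [:: p1, p2 & q] = [:: p1, p2 & t].
  by rewrite /t; case: (k) k_gt2 => [|[|n]] //= _; rewrite subn2.
have size_t : size t = k - 2 by rewrite size_takel //; lia.
have size_k : (k - 2).+2 = k by lia.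
have wk : dipath arc w [:: p1, p2 & t].
  by rewrite -take_k; apply: dipath_take; case: sw => wq _ _; apply/andP.
have xw : arc (last p2 t) w.
  have k_gt1 : 1 < size (take k [:: p1, p2 & q]) by rewrite take_k /= size_t; lia.
  have := shortest_walk_no_arc (shortest_walk_take k sw) k_gt1 (mem_head _ _).
  rewrite take_k /= => nwx.
  have := hqt wk; rewrite /= size_t size_k => /(_ erefl) /orP[wx | //].
  by rewrite wx in nwx.
have notin_S a : a \in [:: w, p1, p2 & t] -> a \notin S.
  rewrite -take_k => /mem_last_take[j]; rewrite size_take_min => jk <-.
  rewrite take_takel; last lia.
  by apply: (shortest_walk_prefix_notin sw) => /=; lia.
have yw : dipath arc y [:: p2 & rcons t w].
  case/andP: wk => /and3P[_ _ p2t] uwk; apply/andP; split.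
    by rewrite /= yp2 rcons_path xw andbT; exact: p2t.
  rewrite cons_uniq -rcons_cons -rot1_cons rot_uniq; apply/andP; split.
    apply: contraL yS; rewrite mem_rot => ywt; apply: notin_S.
    by move: ywt; rewrite !inE => /or3P[] ->; rewrite ?orbT.
  exact: subseq_uniq (cat_subseq (subseq_refl [:: w]) (subseq_cons _ p1)) uwk.
have := hqt yw; rewrite /= size_rcons size_t size_k last_rcons.
case/(_ erefl)/orP=> // wy.
by move: (shortest_walk_no_arc sw (isT : 1 < (size q).+2) yS); rewrite wy.
Qed.

Lemma shortest_walk_in_arc w q :
  shortest_walk arc S w q -> uniq (w :: q) -> 1 < size q ->
  exists2 y, y \in S & arc y w.
Proof.
move sz: (size q) => r; elim/ltn_ind: r w q sz => r IH w q sz sw uq q_gt1; subst r.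
have [q_le_k | k_lt_q] := leqP (size q) k.
  exact: shortest_walk_in_arc_base sw uq q_gt1 q_le_k.
case: q IH sw uq q_gt1 k_lt_q => [|p1 [|p2 q]] // IH sw uq _ /= k_lt_q.
have sw2 : shortest_walk arc S p2 q.
  by have := shortest_walk_drop 2 sw; rewrite /= take0 drop0.
have /and3P[_ _ uq2] := uq.
have [|y yS yp2] := IH (size q) (leqnSn _) p2 q erefl sw2 uq2; first lia.
by exists y; last exact: shortest_walk_in_arc_step sw uq k_lt_q yS yp2.
Qed.

Lemma arc_into_set z : z \notin S -> {in S, forall y, ~~ arc y z} ->
  (exists p, path arc z p && (last z p \in S)) -> exists2 y, y \in S & arc z y.
Proof.
move=> zS noin /shortest_walk_exists[q sw uq].
have [q_gt1 | ] := ltnP 1 (size q).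
  by have [y yS yz] := shortest_walk_in_arc sw uq q_gt1; move: (noin y yS); rewrite yz.
case: sw => + + _; case: q {uq} => [|y [|]] //=; first by rewrite (negbTE zS).
by rewrite andbT => zy yS _; exists y.
Qed.

End ArcIntoSet.

Section ShortestPath.
Variables (T : finType) (arc : rel T) (k : nat).
Hypotheses (k_gt3 : 3 < k) (hqt : quasi_transitive arc k) (hstrong : strong arc).
Variables (u : T) (s : seq T).
Hypotheses (us : dipath arc u s) (size_s : size s = k.+2).
Hypothesis us_shortest : shortest_walk arc [:: last u s] u s.
Hypothesis us_semicomplete : forall a b,
  a \in u :: s -> b \in u :: s -> a != b -> adjacent arc a b.

Lemma subwalk_ucycle S x p :
  {subset x :: p <= u :: s} -> dipath arc x p -> shortest_walk arc S x p ->
  1 < size p -> ucycle arc (x :: p).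
Proof.
move=> sub /andP[xp uxp] sw p_gt1; apply: (shortest_walk_ucycle sw) => //.
have lp : last x p \in p by case: p p_gt1 {xp uxp sw sub} => //= y p _; apply: mem_last.
apply: us_semicomplete; rewrite ?sub ?mem_head ?in_cons ?lp ?orbT //.
by apply: (contraTneq _ lp) => <-; case/andP: uxp.
Qed.

Local Notation x3 := (last u (take 3 s)).
Local Notation front := (u :: take k.-1 s).
Local Notation back := (x3 :: drop 3 s).

Lemma take3_sub_front y : y \in take 3 s -> y \in front.
Proof.
have -> : take 3 s = take 3 (take k.-1 s) by rewrite take_takel //; lia.
by move/mem_take => y_front; rewrite in_cons y_front orbT.
Qed.

Lemma x3_in_front : x3 \in front.
Proof.
have := mem_last u (take 3 s); rewrite in_cons => /orP[/eqP -> | /take3_sub_front //].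
exact: mem_head.
Qed.

Lemma windows_cover y : y \in u :: s -> (y \in front) || (y \in back).
Proof.
case/predU1P=> [-> | ys]; first by rewrite mem_head.
have: y \in take 3 s ++ drop 3 s by rewrite cat_take_drop.
rewrite mem_cat => /orP[/take3_sub_front -> // | yd].
by apply/orP; right; rewrite in_cons yd orbT.
Qed.

Lemma front_sub : {subset front <= u :: s}.
Proof. by move=> y; rewrite !in_cons => /orP[-> // | /mem_take ->]; rewrite orbT. Qed.

Lemma back_sub : {subset back <= u :: s}.
Proof.
move=> y; rewrite in_cons => /orP[/eqP -> | /mem_drop ys].
  exact: front_sub x3_in_front.
by rewrite in_cons ys orbT.
Qed.

Lemma size_front : size front = k.
Proof. by rewrite /= size_take_min size_s; lia. Qed.

Lemma size_back : size back = k.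
Proof. by rewrite /= size_drop size_s; lia. Qed.

Lemma front_ucycle : ucycle arc front.
Proof.
apply: subwalk_ucycle front_sub (dipath_take _ us) (shortest_walk_take _ us_shortest) _.
by rewrite size_take_min size_s; lia.
Qed.

Lemma back_ucycle : ucycle arc back.
Proof.
apply: subwalk_ucycle back_sub (dipath_drop _ us) (shortest_walk_drop _ us_shortest) _.
by rewrite size_drop size_s; lia.
Qed.

Lemma shortest_path_dipaths y l : y \in u :: s -> l <= k - 2 ->
  exists q, [/\ dipath arc y q, size q = l & {subset q <= u :: s}].
Proof.
move=> /windows_cover /orP[yW | yW] lk.
  have [|q [yq sq qW]] := ucycle_dipath (l := l) front_ucycle yW.
    by rewrite size_front; lia.
  by exists q; split=> // x /qW /front_sub.
have [|q [yq sq qW]] := ucycle_dipath (l := l) back_ucycle yW.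
  by rewrite size_back; lia.
by exists q; split=> // x /qW /back_sub.
Qed.

Lemma outsider_dominates z : z \notin u :: s -> {in u :: s, forall y, ~~ arc y z} ->
  {in u :: s, forall y, arc z y}.
Proof.
move=> zP noin.
have [y0 y0P zy0] : exists2 y, y \in u :: s & arc z y.
  apply: (arc_into_set _ hqt shortest_path_dipaths zP noin); first lia.
  by have [p [/andP[zp _] pu]] := hstrong z u; exists p; rewrite zp pu mem_head.
have dominated W : ucycle arc W -> size W = k -> {subset W <= u :: s} ->
    has (arc z) W -> all (arc z) W.
  move=> cW sW WP; apply: (ucycle_dominated hqt cW sW).
    exact: contra (@WP z) zP.
  by move=> y /WP /noin.
have dom_front := dominated _ front_ucycle size_front front_sub.
have dom_back := dominated _ back_ucycle size_back back_sub.
have zx3 : arc z x3.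
  case/orP: (windows_cover y0P) => y0W.
    by apply: (allP (dom_front _)) x3_in_front; apply/hasP; exists y0.
  by apply: (allP (dom_back _)) (mem_head _ _); apply/hasP; exists y0.
have /andP[all_front all_back] : all (arc z) front && all (arc z) back.
  have has_x3 W : x3 \in W -> has (arc z) W by move=> x3W; apply/hasP; exists x3.
  by rewrite dom_front ?dom_back ?has_x3 ?x3_in_front ?mem_head.
by move=> y /windows_cover /orP[/(allP all_front) | /(allP all_back)].
Qed.

End ShortestPath.

Theorem lemma2p12 (T : finType) (arc : rel T) (arc_irr : irreflexive arc)
  (k : nat) (k_odd : odd k) (k_ge5 : 5 <= k)
  (hqt : quasi_transitive arc k) (hstrong : strong arc)
  (hdiam : diam_ge arc (k + 2))
  (u v : T) (huv : dist_is arc u v (k + 2))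
  (s : seq T) (hP : dipath arc u s) (hPv : last u s = v)
  (hPlen : size s = k + 2)
  (hsemi : forall a b, a \in u :: s -> b \in u :: s -> a != b -> adjacent arc a b) :
  (forall x, x \notin u :: s -> (forall y, y \in u :: s -> ~~ arc y x) ->
     forall y, y \in u :: s -> arc x y && ~~ arc y x) /\
  (forall x, x \notin u :: s -> (forall y, y \in u :: s -> ~~ arc x y) ->
     forall y, y \in u :: s -> arc y x && ~~ arc x y).
Proof.
have k_gt3 : 3 < k by lia.
have size_s : size s = k.+2 by rewrite hPlen addn2.
rewrite -hPv -hPlen in huv; have sw := dist_shortest_walk huv (andP hP).1.
split=> x xP no_in y yP; rewrite no_in // andbT.
  exact: (outsider_dominates k_gt3 hqt hstrong hP size_s sw hsemi xP no_in yP).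
apply: (outsider_dominates k_gt3 (quasi_transitive_rev hqt) (strong_rev hstrong)
          (dipath_rev hP) _ _ _ (z := x)); rewrite ?mem_rev_belast //.
- by rewrite size_rev size_belast.
- by rewrite last_rev_belast; apply: shortest_walk_rev.
- move=> a b; rewrite !mem_rev_belast => aP bP ab.
  by rewrite /adjacent orbC; exact: hsemi.
- by move=> y'; rewrite mem_rev_belast; apply: no_in.
Qed.
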